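(* Let $P\in\mathbb{R}^{p\times m}$, $Y_d\in\mathbb{R}^p$, plant $Y_k=PU_k+N_k$, $E_k=Y_d-Y_k$, $\bar U_k=-\Delta U_k$, $D_k=-\Delta N_k$ (so $E_{k+1}=E_k+P\bar U_k+D_k$), $\bar B=\begin{bmatrix}P\\0\end{bmatrix}$, $\bar L\in\mathbb{R}^{2p\times p}$, and consider the ESO $\hat{\bar X}_{k+1}=(\bar A-\bar L\bar C)\hat{\bar X}_k+\bar B\bar U_k+\bar LE_k$ with $\hat{\bar X}_k=\begin{bmatrix}\hat E_k\\\hat D_k\end{bmatrix}$, $\hat E_k,\hat D_k\in\mathbb{R}^p$. Let $K,H\in\mathbb{R}^{m\times p}$, $\bar K=\begin{bmatrix}K&H\end{bmatrix}$, and apply $\bar U_k=-\bar K\hat{\bar X}_k=-K\hat E_k-H\hat D_k$. Then $\begin{bmatrix}E_{k+1}\\\hat{\bar X}_{k+1}\end{bmatrix}=G\begin{bmatrix}E_{k}\\\hat{\bar X}_{k}\end{bmatrix}+\begin{bmatrix}I\\0\end{bmatrix}D_k$ with $G=\begin{bmatrix}I&-P\bar K\\\bar L&\bar A-\bar L\bar C-\bar B\bar K\end{bmatrix}$, and with the nonsingular $T=\begin{bmatrix}I&0\\-\bar C^{\top}&I\end{bmatrix}$ one has $TGT^{-1}=\begin{bmatrix}I-PK&-P\bar K\\0&\bar A-\bar L\bar C\end{bmatrix}$. Consequently the eigenvalues of $G$ are those of $I-PK$ together with those of $\bar A-\bar L\bar C$ (separation principle), so the feedback gain $K$ and the observer gain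 $\bar L$ can be designed separately, $K$ in the same way as for the pure state feedback $\bar U_k=-KE_k$.
   Context: $\mathbb{Z}_+=\{0,1,2,\dots\}$; $\Delta f_k=f_{k+1}-f_k$. $U_k\in\mathbb{R}^m$ input, $Y_k\in\mathbb{R}^p$ output, $(N_k)\subset\mathbb{R}^p$ a bounded uncertainty sequence. $\bar A=\begin{bmatrix}I_p&I_p\\0&I_p\end{bmatrix}$, $\bar C=\begin{bmatrix}I_p&0\end{bmatrix}$. *)

From HB Require Import structures.
From mathcomp Require Import all_boot all_order all_algebra.
Set Implicit Arguments. Unset Strict Implicit. Unset Printing Implicit Defensive.
Import Order.TTheory GRing.Theory Num.Theory.
Local Open Scope ring_scope.

Section Defs.
Variables (R : realFieldType) (p m : nat).

Definition Abar : 'M[R]_(p + p) := block_mx 1%:M 1%:M 0 1%:M.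
Definition Cbar : 'M[R]_(p, p + p) := row_mx 1%:M 0.
Definition Bbar (P : 'M[R]_(p, m)) : 'M[R]_(p + p, m) := col_mx P 0.
Definition Kbar (K H : 'M[R]_(m, p)) : 'M[R]_(m, p + p) := row_mx K H.

Definition Gmat (P : 'M[R]_(p, m)) (Lbar : 'M[R]_(p + p, p)) (K H : 'M[R]_(m, p))
  : 'M[R]_(p + (p + p)) :=
  block_mx 1%:M (- (P *m Kbar K H)) Lbar
           (Abar - Lbar *m Cbar - Bbar P *m Kbar K H).

Definition Tmat : 'M[R]_(p + (p + p)) := block_mx 1%:M 0 (- Cbar^T) 1%:M.
End Defs.

(** The similarity [T] subtracts [Cbar^T] times the error row from the
    observer rows; since [Cbar Cbar^T = 1], [Kbar Cbar^T = K],
    [Abar Cbar^T = Cbar^T] and [Cbar^T P = Bbar P], this cancels the observer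
    gain [Lbar] from the lower-left block of [G].  The characteristic
    polynomial of the resulting block upper-triangular matrix factors, which
    gives the separation of eigenvalues. *)
From HB Require Import structures.
From mathcomp Require Import all_boot all_order all_algebra.
From mathcomp Require Import ring.
Import Order.TTheory GRing.Theory Num.Theory.
Local Open Scope ring_scope.

Lemma char_poly_conj {R : comUnitRingType} {n} {T A : 'M[R]_n} :
  T \in unitmx -> char_poly (T *m A *m invmx T) = char_poly A.
Proof.
move=> uT; have TV : T *m invmx T = 1%:M by rewrite mulmxV.
have conj_mx : char_poly_mx (T *m A *m invmx T)
    = map_mx polyC T *m char_poly_mx A *m map_mx polyC (invmx T).
  rewrite /char_poly_mx mulmxBr mulmxBl -!map_mxM mul_mx_scalar -scalemxAl.
  by rewrite -map_mxM TV map_mx1 scalemx1.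
rewrite /char_poly conj_mx !det_mulmx !det_map_mx mulrAC -rmorphM.
by rewrite -det_mulmx TV det1 rmorph1 mul1r.
Qed.

Lemma char_poly_ublock (R : comNzRingType) n1 n2
    (A : 'M[R]_n1) (B : 'M[R]_(n1, n2)) (D : 'M[R]_n2) :
  char_poly (block_mx A B 0 D) = char_poly A * char_poly D.
Proof.
rewrite /char_poly /char_poly_mx map_block_mx map_mx0 (scalar_mx_block n1 n2).
by rewrite opp_block_mx add_block_mx oppr0 addr0 sub0r det_ublock.
Qed.

Lemma tracking_error_increment (R : comNzRingType) p m (P : 'M[R]_(p, m))
    (Yd n n' : 'cV[R]_p) (u u' : 'cV[R]_m) :
  Yd - (P *m u' + n')
  = Yd - (P *m u + n) + P *m (- (u' - u)) + (- (n' - n)).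
Proof.
rewrite mulmxN mulmxBr; set y := P *m u; set y' := P *m u'.
by apply/matrixP => i j; rewrite !mxE; ring.
Qed.

Section SeparationPrinciple.
Variables (R : realFieldType) (p m : nat).
Implicit Types (P : 'M[R]_(p, m)) (Lbar : 'M[R]_(p + p, p)) (K H : 'M[R]_(m, p)).

Lemma tr_Cbar : (Cbar R p)^T = col_mx 1%:M 0.
Proof. by rewrite /Cbar tr_row_mx trmx1 trmx0. Qed.

Lemma Cbar_mul_tr : Cbar R p *m (Cbar R p)^T = 1%:M.
Proof. by rewrite tr_Cbar /Cbar mul_row_col mul0mx addr0 mul1mx. Qed.

Lemma Kbar_mul_tr_Cbar K H : Kbar K H *m (Cbar R p)^T = K.
Proof. by rewrite tr_Cbar /Kbar mul_row_col mulmx0 addr0 mulmx1. Qed.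

Lemma Abar_mul_tr_Cbar : Abar R p *m (Cbar R p)^T = (Cbar R p)^T.
Proof. by rewrite tr_Cbar /Abar mul_block_col !mulmx0 !addr0 mulmx1 mul0mx. Qed.

Lemma tr_Cbar_mul P : (Cbar R p)^T *m P = Bbar P.
Proof. by rewrite tr_Cbar /Bbar mul_col_mx mul1mx mul0mx. Qed.

Lemma det_Tmat : \det (Tmat R p) = 1.
Proof. by rewrite /Tmat det_lblock !det1 mulr1. Qed.

Lemma Tmat_unit : Tmat R p \in unitmx.
Proof. by rewrite unitmxE det_Tmat unitr1. Qed.

Lemma Tmat_mul_Gmat P Lbar K H :
  Tmat R p *m Gmat P Lbar K H
  = block_mx (1%:M - P *m K) (- (P *m Kbar K H)) 0 (Abar R p - Lbar *m Cbar R p)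
    *m Tmat R p.
Proof.
rewrite /Tmat /Gmat !mulmx_block !mul1mx !mulmx1 !mul0mx !mulmx0 !add0r !addr0.
congr block_mx.
- by rewrite mulNmx mulmxN opprK -mulmxA Kbar_mul_tr_Cbar subrK.
- by rewrite mulmxN mulmxBl Abar_mul_tr_Cbar -mulmxA Cbar_mul_tr mulmx1 opprB addrC.
- by rewrite mulNmx mulmxN opprK mulmxA tr_Cbar_mul addrC subrK.
Qed.

Lemma Gmat_conj_Tmat P Lbar K H :
  Tmat R p *m Gmat P Lbar K H *m invmx (Tmat R p)
  = block_mx (1%:M - P *m K) (- (P *m Kbar K H)) 0 (Abar R p - Lbar *m Cbar R p).
Proof. by rewrite Tmat_mul_Gmat mulmxK // Tmat_unit. Qed.

Lemma char_poly_Gmat P Lbar K H :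
  char_poly (Gmat P Lbar K H)
  = char_poly (1%:M - P *m K) * char_poly (Abar R p - Lbar *m Cbar R p).
Proof.
by rewrite -(char_poly_conj Tmat_unit) Gmat_conj_Tmat char_poly_ublock.
Qed.

Lemma eigenvalue_Gmat P Lbar K H a :
  eigenvalue (Gmat P Lbar K H) a
  = eigenvalue (1%:M - P *m K) a || eigenvalue (Abar R p - Lbar *m Cbar R p) a.
Proof. by rewrite !eigenvalue_root_char char_poly_Gmat rootM. Qed.

Lemma closed_loop_step P Lbar K H (e e' d : 'cV[R]_p) (x x' : 'cV[R]_(p + p))
    (ub : 'cV[R]_m) :
  e' = e + P *m ub + d ->
  x' = (Abar R p - Lbar *m Cbar R p) *m x + Bbar P *m ub + Lbar *m e ->
  ub = - (Kbar K H *m x) ->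
  col_mx e' x' = Gmat P Lbar K H *m col_mx e x + col_mx 1%:M 0 *m d.
Proof.
move=> -> -> ->; rewrite /Gmat mul_block_col [col_mx 1%:M 0 *m d]mul_col_mx.
rewrite mul1mx mul0mx add_col_mx addr0 mulmxN mulNmx mulmxA.
congr col_mx; first by rewrite mul1mx.
by rewrite mulmxN mulmxA [RHS]addrC !mulmxBl.
Qed.

End SeparationPrinciple.

Theorem lemma4 (R : realFieldType) (p m : nat)
  (P : 'M[R]_(p, m)) (Yd : 'cV[R]_p) (Lbar : 'M[R]_(p + p, p))
  (K H : 'M[R]_(m, p)) :
  (* closed-loop dynamics along any trajectory of plant + ESO + control law *)
  (forall (U : nat -> 'cV[R]_m) (N Y E D : nat -> 'cV[R]_p)
          (Ub : nat -> 'cV[R]_m) (Xh : nat -> 'cV[R]_(p + p)),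
      (exists M : R, forall k i, `|N k i 0| <= M) ->
      (forall k, Y k = P *m U k + N k) ->
      (forall k, E k = Yd - Y k) ->
      (forall k, Ub k = - (U k.+1 - U k)) ->
      (forall k, D k = - (N k.+1 - N k)) ->
      (forall k, Xh k.+1 = (Abar R p - Lbar *m Cbar R p) *m Xh k
                           + Bbar P *m Ub k + Lbar *m E k) ->
      (forall k, Ub k = - (Kbar K H *m Xh k)) ->
      forall k, col_mx (E k.+1) (Xh k.+1)
                = Gmat P Lbar K H *m col_mx (E k) (Xh k)
                  + col_mx (1%:M : 'M[R]_p) (0 : 'M[R]_(p + p, p)) *m D k)
  /\ Tmat R p \in unitmx
  /\ Tmat R p *m Gmat P Lbar K H *m invmx (Tmat R p)
       = block_mx (1%:M - P *m K) (- (P *m Kbar K H))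
                  0 (Abar R p - Lbar *m Cbar R p)
  /\ char_poly (Gmat P Lbar K H)
       = char_poly (1%:M - P *m K) * char_poly (Abar R p - Lbar *m Cbar R p)
  /\ (forall a : R, eigenvalue (Gmat P Lbar K H) a <->
        eigenvalue (1%:M - P *m K) a \/ eigenvalue (Abar R p - Lbar *m Cbar R p) a).
Proof.
split.
  move=> U N Y E D Ub Xh _ hY hE hUb hD hX hK k.
  apply: closed_loop_step (hX k) (hK k).
  rewrite !hE !hY hUb hD; exact: tracking_error_increment.
split; first exact: Tmat_unit.
split; first exact: Gmat_conj_Tmat.
split; first exact: char_poly_Gmat.
by move=> a; rewrite eigenvalue_Gmat; split => /orP.
Qed.
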